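(* Let $n=n_1\cdots n_\ell>2$ with integers $n_i\ge2$ and let $U=F_{(n_1,\dots,n_\ell)}$ (modes labelled as in the context); in particular $U=F_n$ or $U=H_n$ are allowed. For the $n$-photon distillation protocol determined by $U$ with input $\rho^{(n)}(\epsilon)$: (1) $h_n(\Phi_1)=\frac1n h_n(0)$; (2) $h_n(\epsilon)=h_n(0)-(n-1)h_n(0)\,\epsilon+O(\epsilon^2)$ as $\epsilon\to0$ ($n$ fixed).
   Context: For $m\ge2$, $F_m=\frac{1}{\sqrt m}(e^{2\pi i jk/m})_{0\le j,k\le m-1}$, $F_{(n_1,\dots,n_\ell)}=F_{n_1}\otimes\cdots\otimes F_{n_\ell}$, $H_{2^r}=F_{(2,\dots,2)}$; the basis vector $|m_1\rangle\otimes\cdots\otimes|m_\ell\rangle$ is identified with mode $m_1+n_1m_2+\cdots+(n_1\cdots n_{\ell-1})m_\ell$. Photons carry an external mode in $\{0,\dots,n-1\}$ and an internal state in a space with orthonormal basis $\{\xi_0,\xi_1,\dots\}$; $a_i^\dagger[\xi]$ creates a photon in mode $i$ with internal state $\xi$. $\hat U$ acts by $a_j^\dagger[\xi]\mapsto\sum_iU_{ij}a_i^\dagger[\xi]$. Ideal patterns of $U$: $(s_0,\dots,s_{n-1})$ with $\sum s_i=n$, $s_0=1$, $\langle s_0,\dots,s_{n-1}|\hat U|1,\dots,1\rangle\neq0$ (Fock states without internal degrees of freedom). Distillation protocol with input $\sigma$: apply $\hat U$, count photons (regardless of internal state) in modes $1,\dots,n-1$, set $s_0=n-\sum_{j\ge1}s_j$,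 and herald success iff $(s_0,\dots,s_{n-1})$ is ideal; $h_n(\sigma)$ is the success probability. Input $\rho^{(n)}(\epsilon)$: the photon in mode $i$ (one photon per mode) independently has internal state $\xi_0$ with probability $1-\epsilon$, and otherwise (URS model with parameter $R\ge1$) $\xi_j$ with probability $\epsilon/R$ for each $1\le j\le R$, or (OBB limit) $\xi_{i+1}$ with probability $\epsilon$. $h_n(\epsilon)=h_n(\rho^{(n)}(\epsilon))$, and $h_n(0)$ is the heralding rate for the input $|1,\dots,1\rangle$ with all photons in internal state $\xi_0$. Writing $\rho^{(n)}(\epsilon)=\sum_{k=0}^n\binom nk\epsilon^k(1-\epsilon)^{n-k}\Phi_k$, $\Phi_1$ is the normalized mixture of the terms $a_0^\dagger[\xi_{j_0}]\cdots a_{n-1}^\dagger[\xi_{j_{n-1}}]|\vec0\rangle$ in which exactly one index $j_i$ is nonzero (uniformly over the position $i$ and over the allowed error state). *)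

From HB Require Import structures.
From mathcomp Require Import all_boot all_order all_algebra all_fingroup.
From mathcomp Require Import reals trigo.
From mathcomp.real_closed Require Import complex.

Set Implicit Arguments.
Unset Strict Implicit.
Unset Printing Implicit Defensive.

Import Order.TTheory GRing.Theory Num.Theory.
Local Open Scope ring_scope.
Local Open Scope complex_scope.

Section Defs.
Variable R : realType.
Local Notation C := R[i].

Definition omega (m : nat) : C := cos (2 * pi / m%:R) +i* sin (2 * pi / m%:R).

Definition fourier_entry (m j k : nat) : C :=
  ((Num.sqrt (m%:R : R))^-1)%:C * omega m ^+ (j * k).

Definition fourier (m : nat) : 'M[C]_m :=
  \matrix_(j < m, k < m) fourier_entry m j k.

Definition prefix_prod (ns : seq nat) (t : nat) : nat := \prod_(k <- take t ns) k.

(* the t-th digit m_{t+1} of mode x = m_1 + n_1 m_2 + ... + (n_1...n_{l-1}) m_l *)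
Definition digit (ns : seq nat) (t x : nat) : nat :=
  (x %/ prefix_prod ns t) %% nth 0 ns t.

Definition dimn (ns : seq nat) : nat := \prod_(k <- ns) k.

(* F_(n_1,...,n_l) = F_{n_1} (x) ... (x) F_{n_l}, with the mode labelling above *)
Definition fourier_tens (ns : seq nat) : 'M[C]_(dimn ns) :=
  \matrix_(x, y) \prod_(t < size ns)
     fourier_entry (nth 0 ns t) (digit ns t x) (digit ns t y).

Variable n : nat.
Implicit Types (U : 'M[C]_n).

(* An output configuration: photon injected in mode k ends in mode o k. *)
Definition pattern (o : {ffun 'I_n -> 'I_n}) : {ffun 'I_n -> 'I_n.+1} :=
  [ffun i => inord #|[pred k | o k == i]|].

Definition camp U (o : {ffun 'I_n -> 'I_n}) : C := \prod_(k < n) U (o k) k.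

Definition s0 (s : {ffun 'I_n -> 'I_n.+1}) : nat := \sum_(i : 'I_n | val i == 0%N) s i.

(* <s| U^ |1,...,1>  for indistinguishable photons:                   *)
(* U^|1..1> = sum_o camp o prod_k a^dag_{o k}|0> and                  *)
(* prod_k a^dag_{o k}|0> = sqrt(prod_i s_i!) |s>  when pattern o = s.  *)
Definition ideal_amp U (s : {ffun 'I_n -> 'I_n.+1}) : C :=
  (Num.sqrt ((\prod_(i < n) (s i)`!)%:R : R))%:C *
  \sum_(o : {ffun 'I_n -> 'I_n} | pattern o == s) camp U o.

Definition ideal U (s : {ffun 'I_n -> 'I_n.+1}) : bool :=
  [&& (\sum_(i < n) (s i : nat) == n)%N, s0 s == 1%N & ideal_amp U s != 0].

(* Bosonic inner product  < o' ; j | o ; j >  of the states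
   prod_k a^dag_{o k}[xi_{j k}] |0>  (permanent of the Gram matrix). *)
Definition gram (j : 'I_n -> nat) (o' o : {ffun 'I_n -> 'I_n}) : C :=
  \sum_(sg : {perm 'I_n})
     \prod_(k < n) ((o' k == o (sg k)) && (j k == j (sg k)))%:R.

(* Probability of detecting occupation pattern s (photons counted irrespective
   of internal state) after applying U^ to the pure input
   a_0^dag[xi_{j 0}] ... a_{n-1}^dag[xi_{j (n-1)}] |0>:  || P_s U^ psi ||^2. *)
Definition pattern_prob U (j : 'I_n -> nat) (s : {ffun 'I_n -> 'I_n.+1}) : R :=
  complex.Re (\sum_(o : {ffun 'I_n -> 'I_n} | pattern o == s)
                \sum_(o' : {ffun 'I_n -> 'I_n} | pattern o' == s)
                   (camp U o')^* * camp U o * gram j o' o).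

(* Heralding probability for the pure labelled input j.  Since the photon
   number is conserved, n - sum_{i>=1} s_i is the actual count in mode 0. *)
Definition herald_pure U (j : 'I_n -> nat) : R :=
  \sum_(s : {ffun 'I_n -> 'I_n.+1} | ideal U s) pattern_prob U j s.

End Defs.

Inductive err_model := URS of nat | OBB.

Definition err_valid (m : err_model) : bool :=
  match m with URS r => (0 < r)%N | OBB => true end.

(* number of allowed error states of a photon *)
Definition nerr (m : err_model) : nat := match m with URS r => r | OBB => 1%N end.

(* internal-state label of the photon in mode i when its choice is k
   (k = 0: xi_0 ; k >= 1: the k-th allowed error state) *)
Definition err_label (m : err_model) (i k : nat) : nat :=
  match m with URS _ => k | OBB => if k == 0%N then 0%N else i.+1 end.

Section Mixed.
Variable R : realType.
Variable n : nat.
Local Notation C := R[i].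

Definition labels (m : err_model) (c : {ffun 'I_n -> 'I_(nerr m).+1}) : 'I_n -> nat :=
  fun i => err_label m i (c i).

Definition h_eps (m : err_model) (U : 'M[C]_n) (eps : R) : R :=
  \sum_(c : {ffun 'I_n -> 'I_(nerr m).+1})
     (\prod_(i < n) (if c i == ord0 then 1 - eps else eps / (nerr m)%:R))
     * herald_pure U (labels c).

(* h_n(Phi_1): Phi_1 is the uniform mixture over the position of the single
   erroneous photon and over its allowed error state. *)
Definition h_Phi1 (m : err_model) (U : 'M[C]_n) : R :=
  ((n * nerr m)%:R)^-1 *
  \sum_(c : {ffun 'I_n -> 'I_(nerr m).+1} | #|[pred i | c i != ord0]| == 1%N)
     herald_pure U (labels c).
End Mixed.

(* Expanding the permanent in [gram], the heralding probability of a pure input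
   is a sum, over output configurations [o], of [camp o] times the conjugated
   amplitudes of [o] relabelled by the permutations preserving the internal
   labels: all permutations for the error-free input, the stabiliser of [i]
   when the only error sits in mode [i].  Permuting the columns of
   F_(n_1,...,n_l) by a digitwise translation multiplies each row by a phase,
   the translations act transitively on the modes, and on an ideal pattern the
   total phase is 1.  Hence the contribution of the permutations sending [g] to
   [g'] does not depend on [(g, g')], and the [n] stabiliser sums add up to the
   full sum: h(Phi_1) = h(0) / n.  For (2), expand the binomial weights of
   rho(eps): the error-free term is (1 - n eps) h(0), the one-error terms
   contribute eps h(Phi_1) n = eps h(0), and the rest is O(eps^2). *)
From HB Require Import structures.
From mathcomp Require Import all_boot all_order all_algebra all_fingroup.
From mathcomp Require Import reals trigo.
From mathcomp.real_closed Require Import complex.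
From mathcomp Require Import zify ring lra.
Import Order.TTheory GRing.Theory Num.Theory.
Local Open Scope ring_scope.
Set Implicit Arguments.
Unset Strict Implicit.
Unset Printing Implicit Defensive.

Lemma prodr_bool (R : comPzSemiRingType) (I : finType) (b : pred I) :
  \prod_(i : I) ((b i)%:R : R) = [forall i, b i]%:R.
Proof.
have [/forallP b_all | /forallPn [i /negbTE b_i]] := boolP [forall i, b i].
  by rewrite big1 // => i _; rewrite b_all.
by rewrite (bigD1 i) //= b_i mul0r.
Qed.

Section Relabel.
Variable n : nat.
Implicit Types (o : {ffun 'I_n -> 'I_n}) (t : {perm 'I_n}).

Definition relabel o t : {ffun 'I_n -> 'I_n} := [ffun k => o (t k)].

Lemma relabelM o a b : relabel (relabel o a) b = relabel o (b * a)%g.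
Proof. by apply/ffunP => k; rewrite !ffunE permM. Qed.

Lemma relabelK t : cancel (relabel ^~ t) (relabel ^~ t^-1%g).
Proof. by move=> o; apply/ffunP => k; rewrite !ffunE permKV. Qed.

Lemma relabelKV t : cancel (relabel ^~ t^-1%g) (relabel ^~ t).
Proof. by move=> o; apply/ffunP => k; rewrite !ffunE permK. Qed.

Lemma relabel_inj t : injective (relabel ^~ t).
Proof. exact: can_inj (relabelK t). Qed.

Lemma relabel_eq o' o t :
  [forall k, o' k == o (t k)] = (o' == relabel o t).
Proof.
apply/forallP/eqP => [o'E | ->]; last by move=> k; rewrite ffunE.
by apply/ffunP => k; rewrite ffunE; apply/eqP.
Qed.

Lemma card_fiber_lt o (x : 'I_n) : (#|[pred k | o k == x]| < n.+1)%N.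
Proof. by rewrite ltnS (leq_trans (max_card _)) // card_ord. Qed.

Lemma pattern_relabel o t : pattern (relabel o t) = pattern o.
Proof.
apply/ffunP => x; rewrite !ffunE; congr inord.
transitivity #|[preim t of [pred k | o k == x]]|.
  by apply: eq_card => k; rewrite !inE ffunE.
rewrite (card_preim (@perm_inj _ t)).
by apply: eq_card => k; rewrite !inE perm_onto.
Qed.

Lemma prod_pattern (R : comPzSemiRingType) (phi : 'I_n -> R) o :
  \prod_k phi (o k) = \prod_x phi x ^+ pattern o x.
Proof.
rewrite (partition_big o xpredT) //=; apply: eq_bigr => x _.
rewrite ffunE inordK ?card_fiber_lt // -prodr_const.
by apply: eq_big => [k | k /eqP ->].
Qed.
End Relabel.

Section ColumnShifts.
Variable R : realType.
Variable n : nat.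
Local Notation C := R[i].
Local Open Scope complex_scope.
Variable U : 'M[C]_n.
Implicit Types (o : {ffun 'I_n -> 'I_n}) (t sg : {perm 'I_n}).
Implicit Types (s : {ffun 'I_n -> 'I_n.+1}) (j : 'I_n -> nat).

Definition col_shift t (phi : 'I_n -> C) := forall x k, U x (t k) = phi x * U x k.

Definition shift_transitive :=
  forall g g' : 'I_n, exists2 t : {perm 'I_n}, t g = g' & exists phi, col_shift t phi.

Definition pattern_amp s := \sum_(o | pattern o == s) camp U o.

Lemma ideal_pattern_amp s : ideal U s -> pattern_amp s != 0.
Proof.
case/and3P=> _ _; apply: contraNneq => amp0.
by rewrite /ideal_amp -/(pattern_amp s) amp0 mulr0.
Qed.

Lemma camp_relabelV t phi o : col_shift t phi ->
  camp U (relabel o t^-1) = (\prod_x phi x ^+ pattern o x) * camp U o.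
Proof.
move=> shift_t; rewrite /camp (reindex_inj (@perm_inj _ t)) /=.
under eq_bigr do rewrite ffunE permK shift_t.
by rewrite big_split /= prod_pattern.
Qed.

(* The phase picked up by [camp] is the same on the whole class of [s], which
   relabelling permutes; a nonzero class sum therefore forces the phase to be 1. *)
Lemma camp_relabelV_id t phi s o : col_shift t phi -> pattern_amp s != 0 ->
  pattern o == s -> camp U (relabel o t^-1) = camp U o.
Proof.
move=> shift_t amp_nz /eqP o_s.
pose c := \prod_x phi x ^+ s x.
have campE o' : pattern o' = s -> camp U (relabel o' t^-1) = c * camp U o'.
  by move=> o'_s; rewrite (camp_relabelV _ shift_t) o'_s.
suff c1 : c = 1 by rewrite campE // c1 mul1r.
have amp_fixed : pattern_amp s = c * pattern_amp s.
  rewrite mulr_sumr [LHS](reindex_inj (@relabel_inj _ t^-1%g)) /=.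
  apply: eq_big => o'; first by rewrite pattern_relabel.
  by rewrite pattern_relabel => /eqP /campE.
have : (1 - c) * pattern_amp s = 0 by rewrite mulrBl mul1r -amp_fixed subrr.
by move/eqP; rewrite mulf_eq0 (negbTE amp_nz) orbF subr_eq0 => /eqP.
Qed.

Definition label_stab j := [pred sg : {perm 'I_n} | [forall k, j k == j (sg k)]].

Definition perm_pairing s (P : pred {perm 'I_n}) : C :=
  \sum_(o | pattern o == s) camp U o * \sum_(sg | P sg) (camp U (relabel o sg))^*.

Lemma eq_perm_pairing s (P Q : pred {perm 'I_n}) :
  P =1 Q -> perm_pairing s P = perm_pairing s Q.
Proof. by move=> PQ; apply: eq_bigr => o _; congr (_ * _); apply: eq_bigl. Qed.

Lemma gram_relabel j o' o :
  gram R j o' o = \sum_(sg | label_stab j sg) (o' == relabel o sg)%:R.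
Proof.
rewrite [RHS]big_mkcond; apply: eq_bigr => sg _.
under eq_bigr do rewrite -mulnb natrM.
rewrite big_split /= !prodr_bool relabel_eq.
by case: [forall k, _]; rewrite ?mulr1 ?mulr0.
Qed.

Lemma pattern_prob_pairing j s :
  pattern_prob U j s = complex.Re (perm_pairing s (label_stab j)).
Proof.
congr complex.Re; apply: eq_bigr => o o_s.
under eq_bigr do rewrite gram_relabel mulr_sumr.
rewrite exchange_big mulr_sumr; apply: eq_bigr => sg _.
rewrite (bigD1 (relabel o sg)) ?pattern_relabel //= eqxx mulr1 big1 ?addr0.
  by rewrite mulrC.
by move=> o' /andP[_ /negbTE ->]; rewrite mulr0.
Qed.

Definition pairing_at s (g g' : 'I_n) := perm_pairing s [pred sg : {perm 'I_n} | sg g == g'].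

Section ShiftInvariance.
Variables (s : {ffun 'I_n -> 'I_n.+1}) (t : {perm 'I_n}) (phi : 'I_n -> C).
Hypotheses (amp_nz : pattern_amp s != 0) (shift_t : col_shift t phi).

Lemma pairing_at_shiftr g g' : pairing_at s g (t g') = pairing_at s g g'.
Proof.
transitivity (\sum_(o | pattern o == s) camp U o *
    \sum_(sg : {perm 'I_n} | sg g == g') (camp U (relabel (relabel o t) sg))^*).
  apply: eq_bigr => o _; congr (_ * _).
  rewrite (reindex_inj (@mulIg _ t)) /=; apply: eq_big => sg.
    by rewrite permM (inj_eq (@perm_inj _ t)).
  by rewrite relabelM.
rewrite (reindex_inj (@relabel_inj _ t^-1%g)) /=; apply: eq_big => o.
  by rewrite pattern_relabel.
by rewrite pattern_relabel => o_s; rewrite relabelKV (camp_relabelV_id shift_t amp_nz).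
Qed.

Lemma pairing_at_shiftl g g' : pairing_at s (t g) g' = pairing_at s g g'.
Proof.
apply: eq_bigr => o o_s; congr (_ * _).
rewrite (reindex_inj (@mulgI _ t^-1%g)) /=; apply: eq_big => sg.
  by rewrite permM permK.
by rewrite -relabelM (camp_relabelV_id shift_t amp_nz) // pattern_relabel.
Qed.
End ShiftInvariance.

(* Transitivity makes [pairing_at s] constant, so its diagonal sum is a row sum. *)
Lemma sum_pairing_at_diag s : shift_transitive -> (0 < n)%N -> pattern_amp s != 0 ->
  \sum_i pairing_at s i i = perm_pairing s predT.
Proof.
move=> trans n_gt0 amp_nz; pose g0 := Ordinal n_gt0.
have pairing_const g g' : pairing_at s g g' = pairing_at s g0 g0.
  have [t1 <- [phi1 shift1]] := trans g0 g.
  have [t2 <- [phi2 shift2]] := trans g0 g'.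
  by rewrite (pairing_at_shiftl amp_nz shift1) (pairing_at_shiftr amp_nz shift2).
transitivity (\sum_g' pairing_at s g0 g').
  by apply: eq_bigr => g _; rewrite !pairing_const.
rewrite exchange_big; apply: eq_bigr => o _; rewrite -mulr_sumr.
by rewrite [in RHS](partition_big (fun sg : {perm 'I_n} => sg g0) xpredT).
Qed.

Lemma label_stab_single j i sg : (forall k, k != i -> j k = 0%N) -> j i != 0%N ->
  label_stab j sg = (sg i == i).
Proof.
move=> j_off j_i; apply/forallP/eqP => [/(_ i) /eqP j_sg_i | sg_i k].
  by apply/eqP; apply: contraNT j_i => sg_i; rewrite j_sg_i j_off.
have [-> | k_i] := eqVneq k i; first by rewrite sg_i.
have sg_k : sg k != i by rewrite -[X in _ != X]sg_i (inj_eq (@perm_inj _ sg)).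
by rewrite !j_off.
Qed.

Definition single_herald i := \sum_(s | ideal U s) complex.Re (pairing_at s i i).

Lemma herald_pure_single j i : (forall k, k != i -> j k = 0%N) -> j i != 0%N ->
  herald_pure U j = single_herald i.
Proof.
move=> j_off j_i; apply: eq_bigr => s _; rewrite pattern_prob_pairing.
by congr complex.Re; apply: eq_perm_pairing => sg; exact: label_stab_single.
Qed.

Lemma sum_single_herald j : shift_transitive -> (0 < n)%N -> (forall k, j k = 0%N) ->
  \sum_i single_herald i = herald_pure U j.
Proof.
move=> trans n_gt0 j0; rewrite exchange_big; apply: eq_bigr => s ideal_s.
rewrite pattern_prob_pairing -raddf_sum.
rewrite sum_pairing_at_diag ?ideal_pattern_amp //.
congr complex.Re; apply: eq_perm_pairing => sg.
by apply/esym/forallP => k; rewrite !j0.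
Qed.
End ColumnShifts.

Section MixedRadix.
Local Open Scope nat_scope.

Definition radix_val (ns : seq nat) (d : nat -> nat) : nat :=
  \sum_(t < size ns) prefix_prod ns t * d t.

Lemma prefix_prod0 a ns : prefix_prod (a :: ns) 0 = 1.
Proof. by rewrite /prefix_prod take0 big_nil. Qed.

Lemma prefix_prodS a ns t : prefix_prod (a :: ns) t.+1 = a * prefix_prod ns t.
Proof. by rewrite /prefix_prod /= big_cons. Qed.

Lemma digit0 a ns x : digit (a :: ns) 0 x = x %% a.
Proof. by rewrite /digit prefix_prod0 divn1. Qed.

Lemma digitS a ns t x : digit (a :: ns) t.+1 x = digit ns t (x %/ a).
Proof. by rewrite /digit prefix_prodS divnMA. Qed.

Lemma dimn_cons a ns : dimn (a :: ns) = a * dimn ns.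
Proof. by rewrite /dimn big_cons. Qed.

Lemma radix_val_cons a ns d :
  radix_val (a :: ns) d = d 0 + a * radix_val ns (fun t => d t.+1).
Proof.
rewrite /radix_val /= big_ord_recl prefix_prod0 mul1n big_distrr /=.
by congr (_ + _); apply: eq_bigr => t _; rewrite prefix_prodS mulnA.
Qed.

Lemma radix_val_digit ns x : all (fun k => 0 < k) ns -> x < dimn ns ->
  radix_val ns (fun t => digit ns t x) = x.
Proof.
elim: ns x => [|a ns IH] x; first by rewrite /dimn big_nil /radix_val big_ord0; case: x.
case/andP=> a_gt0 ns_pos; rewrite dimn_cons => x_lt.
rewrite radix_val_cons digit0.
have -> : radix_val ns (fun t => digit (a :: ns) t.+1 x) =
          radix_val ns (fun t => digit ns t (x %/ a)).
  by apply: eq_bigr => t _; rewrite digitS.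
rewrite IH ?ltn_divLR 1?mulnC //.
by rewrite [RHS](divn_eq x a) addnC mulnC.
Qed.

Lemma digit_inj ns x y : all (fun k => 0 < k) ns -> x < dimn ns -> y < dimn ns ->
  (forall t, t < size ns -> digit ns t x = digit ns t y) -> x = y.
Proof.
move=> ns_pos x_lt y_lt digit_xy.
rewrite -(radix_val_digit ns_pos x_lt) -(radix_val_digit ns_pos y_lt).
by apply: eq_bigr => t _; rewrite digit_xy.
Qed.

Lemma radix_val_lt ns d : all (fun k => 0 < k) ns ->
  (forall t, t < size ns -> d t < nth 0 ns t) -> radix_val ns d < dimn ns.
Proof.
elim: ns d => [|a ns IH] d; first by rewrite /radix_val big_ord0 /dimn big_nil.
case/andP=> a_gt0 ns_pos d_lt; rewrite radix_val_cons dimn_cons.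
have IH' := IH _ ns_pos (fun t => d_lt t.+1).
apply: (leq_trans (n := a * (radix_val ns (fun t => d t.+1)).+1)).
  by rewrite mulnS ltn_add2r (d_lt 0).
by rewrite leq_mul2l IH' orbT.
Qed.

Lemma digit_radix_val ns d t : (forall t, t < size ns -> d t < nth 0 ns t) ->
  t < size ns -> digit ns t (radix_val ns d) = d t.
Proof.
elim: ns d t => [|a ns IH] d [|t] //= d_lt t_lt; rewrite radix_val_cons.
  by rewrite digit0 addnC mulnC modnMDl modn_small // (d_lt 0).
have a_gt0 : 0 < a by apply: leq_ltn_trans (d_lt 0 _).
rewrite digitS addnC mulnC divnMDl // divn_small ?(d_lt 0) // addn0.
by apply: IH => // t' t'_lt; apply: (d_lt t'.+1).
Qed.
End MixedRadix.

Section FourierShifts.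
Variable R : realType.
Local Open Scope complex_scope.

Lemma expi_mul (a b : R) :
  (cos a +i* sin a) * (cos b +i* sin b) = cos (a + b) +i* sin (a + b).
Proof.
rewrite cosD sinD; apply/eqP; rewrite eq_complex /=.
by apply/andP; split; apply/eqP; ring.
Qed.

Lemma expi_exp (a : R) k : (cos a +i* sin a) ^+ k = cos (a *+ k) +i* sin (a *+ k).
Proof.
elim: k => [|k IH]; first by rewrite expr0 mulr0n cos0 sin0.
by rewrite exprS IH expi_mul mulrS.
Qed.

Lemma omega_exp_order m : (0 < m)%N -> omega R m ^+ m = 1.
Proof.
move=> m_gt0; rewrite /omega expi_exp.
suff -> : (2 * pi / m%:R) *+ m = pi *+ 2 :> R by rewrite cos2pi sin2pi.
by rewrite -mulr_natr mulfVK ?pnatr_eq0 -?lt0n // mulr_natl.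
Qed.

Lemma omega_exp_mod m a : (0 < m)%N -> omega R m ^+ (a %% m) = omega R m ^+ a.
Proof.
move=> m_gt0; rewrite [in RHS](divn_eq a m) exprD mulnC exprM.
by rewrite omega_exp_order // expr1n mul1r.
Qed.

Lemma fourier_entry_shift m j k h : (0 < m)%N ->
  fourier_entry R m j ((k + h) %% m) = omega R m ^+ (j * h) * fourier_entry R m j k.
Proof.
move=> m_gt0; rewrite /fourier_entry mulrCA -exprD -mulnDr (addnC h k).
by congr (_ * _); rewrite -[RHS]omega_exp_mod // -modnMmr omega_exp_mod.
Qed.

Variable ns : seq nat.
Hypothesis ns_pos : all (fun k => 0 < k)%N ns.
Local Notation D := (dimn ns).
Local Notation nth_dim t := (nth 0%N ns t).

Lemma nth_dim_gt0 t : (t < size ns)%N -> (0 < nth_dim t)%N.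
Proof. exact: (all_nthP 0 ns_pos). Qed.

Lemma mod_nth_dim_lt t a : (t < size ns)%N -> (a %% nth_dim t < nth_dim t)%N.
Proof. by move=> t_lt; rewrite ltn_pmod ?nth_dim_gt0. Qed.

(* Translation by [h] in Z_{n_1} x ... x Z_{n_l}, through the mode labelling. *)
Definition digit_add (h k : nat) : nat :=
  radix_val ns (fun t => (digit ns t k + digit ns t h) %% nth_dim t)%N.

Lemma digit_add_lt h k : (digit_add h k < D)%N.
Proof. exact: radix_val_lt ns_pos (fun t => @mod_nth_dim_lt t _). Qed.

Lemma digit_digit_add t h k : (t < size ns)%N ->
  digit ns t (digit_add h k) = ((digit ns t k + digit ns t h) %% nth_dim t)%N.
Proof. exact: digit_radix_val (fun t => @mod_nth_dim_lt t _). Qed.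

Definition digit_shift_fun (h k : 'I_D) : 'I_D := Ordinal (digit_add_lt h k).

Lemma digit_shift_fun_inj h : injective (digit_shift_fun h).
Proof.
move=> k1 k2 /(congr1 val) /= eq_add.
apply/val_inj/(digit_inj ns_pos (ltn_ord k1) (ltn_ord k2)) => t t_lt.
move/(congr1 (digit ns t))/eqP: eq_add; rewrite !digit_digit_add // eqn_modDr.
by rewrite !modn_small ?mod_nth_dim_lt // => /eqP.
Qed.

Definition digit_shift h : {perm 'I_D} := perm (@digit_shift_fun_inj h).

Lemma fourier_tens_shift h :
  col_shift (fourier_tens R ns) (digit_shift h)
    (fun x => \prod_(t < size ns) omega R (nth_dim t) ^+ (digit ns t x * digit ns t h)).
Proof.
move=> x k; rewrite !mxE permE -big_split; apply: eq_bigr => t _ /=.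
by rewrite digit_digit_add // fourier_entry_shift // nth_dim_gt0.
Qed.

Lemma fourier_tens_shift_transitive : shift_transitive (fourier_tens R ns).
Proof.
move=> g g'.
pose dh t := ((digit ns t g' + (nth_dim t - digit ns t g)) %% nth_dim t)%N.
have dh_lt t : (t < size ns)%N -> (dh t < nth_dim t)%N by apply: mod_nth_dim_lt.
exists (digit_shift (Ordinal (radix_val_lt ns_pos dh_lt))); last first.
  by eexists; apply: fourier_tens_shift.
apply/val_inj/(digit_inj ns_pos (ltn_ord _) (ltn_ord _)) => t t_lt.
rewrite permE digit_digit_add // digit_radix_val // /dh modnDmr.
have g_le : (digit ns t g <= nth_dim t)%N by rewrite ltnW ?mod_nth_dim_lt.
by rewrite addnCA subnKC // modnDr modn_small ?mod_nth_dim_lt.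
Qed.
End FourierShifts.

Section ErrorConfigs.
Variables (n : nat) (m : err_model).
Local Notation r := (nerr m).
Local Notation config := {ffun 'I_n -> 'I_r.+1}.
Implicit Types (c : config).

Definition num_errors c := #|[pred i | c i != ord0]|.

Definition no_error : config := [ffun => ord0].

Lemma err_valid_nerr : err_valid m -> (0 < r)%N.
Proof. by case: m. Qed.

Lemma num_errors_le c : (num_errors c <= n)%N.
Proof. by rewrite /num_errors (leq_trans (max_card _)) // card_ord. Qed.

Lemma num_errors_eq0 c : (num_errors c == 0%N) = (c == no_error).
Proof.
apply/eqP/eqP => [/card0_eq no_err | ->].
  by apply/ffunP => i; rewrite ffunE; move/negbFE/eqP: (no_err i).
by apply: eq_card0 => i; rewrite !inE ffunE eqxx.
Qed.

Lemma labels_eq0 c k : (labels c k == 0%N) = (c k == ord0).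
Proof. by rewrite /labels; case: m c => [r' | ] c //=; case: (c k) => [[|v] ?]. Qed.

Lemma labels_no_error k : labels no_error k = 0%N.
Proof. by apply/eqP; rewrite labels_eq0 ffunE. Qed.

Lemma single_errorP c : num_errors c == 1%N ->
  exists i, forall k, (c k != ord0) = (k == i).
Proof. by case/card1P=> i err_i; exists i => k; move: (err_i k); rewrite !inE. Qed.

Lemma single_error_at c i : num_errors c == 1%N -> c i != ord0 ->
  forall k, (c k != ord0) = (k == i).
Proof. by case/single_errorP=> k err_k; rewrite err_k => /eqP ->. Qed.

Lemma card_single_error i :
  #|[pred c : config | (num_errors c == 1%N) && (c i != ord0)]| = r.
Proof.
pose single (v : 'I_r.+1) : config := [ffun k => if k == i then v else ord0].
have single_inj : injective single.
  by move=> v1 v2 /(congr1 (fun c => c i)); rewrite !ffunE eqxx.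
transitivity #|[pred v : 'I_r.+1 | v != ord0]|; last by rewrite cardC1 card_ord.
rewrite -(card_image single_inj); apply: eq_card => c.
rewrite !inE; apply/andP/imageP => [[one_err err_i] | [v]].
  exists (c i) => //; apply/ffunP => k; rewrite ffunE; case: eqVneq => [-> // | k_i].
  by apply/eqP/negbNE; rewrite (single_error_at one_err err_i) k_i.
rewrite inE => v_nz ->; rewrite ffunE eqxx; split=> //.
apply/eqP/(@eq_card1 _ i) => k.
by rewrite !inE ffunE; case: (eqVneq k i).
Qed.

Lemma sum_single_errors (R : pzSemiRingType) (F : config -> R) (T : 'I_n -> R) :
  (forall c i, num_errors c == 1%N -> c i != ord0 -> F c = T i) ->
  \sum_(c | num_errors c == 1%N) F c = r%:R * \sum_i T i.
Proof.
move=> FT.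
transitivity (\sum_(c | num_errors c == 1%N) \sum_(i | c i != ord0) T i).
  apply: eq_bigr => c /[dup] one_err /single_errorP [i err_i].
  rewrite (big_pred1 i) //; apply: FT => //; by rewrite err_i.
rewrite (exchange_big_dep xpredT) //= mulr_sumr; apply: eq_bigr => i _.
by rewrite sumr_const card_single_error mulr_natl.
Qed.
End ErrorConfigs.
Arguments no_error {n m}.

Section FirstOrder.
Variable R : realFieldType.
Implicit Types (e : R).

Lemma exp1B_linear_bound e k : 0 <= e <= 1 -> `|(1 - e) ^+ k - 1| <= k%:R * e.
Proof.
case/andP=> e_ge0 e_le1; have e'_ge0 : 0 <= 1 - e by rewrite subr_ge0.
elim: k => [|k IH]; first by rewrite expr0 subrr normr0 mul0r.
have -> : (1 - e) ^+ k.+1 - 1 = (1 - e) * ((1 - e) ^+ k - 1) - e by rewrite exprS; ring.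
rewrite (le_trans (ler_normB _ _)) // normrM (ger0_norm e_ge0) (ger0_norm e'_ge0).
have : (1 - e) * `|(1 - e) ^+ k - 1| <= `|(1 - e) ^+ k - 1|.
  by rewrite ler_piMl // lerBlDr lerDl.
rewrite -natr1 mulrDl mul1r; lra.
Qed.

Lemma exp1B_quadratic_bound e k : 0 <= e <= 1 ->
  `|(1 - e) ^+ k - 1 + k%:R * e| <= (k ^ 2)%:R * e ^+ 2.
Proof.
case/andP=> e_ge0 e_le1; have e'_ge0 : 0 <= 1 - e by rewrite subr_ge0.
elim: k => [|k IH]; first by rewrite expr0 mul0r addr0 subrr normr0 mul0r.
have -> : (1 - e) ^+ k.+1 - 1 + k.+1%:R * e =
          (1 - e) * ((1 - e) ^+ k - 1 + k%:R * e) + k%:R * e ^+ 2.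
  by rewrite exprS -natr1; ring.
rewrite (le_trans (ler_normD _ _)) // normrM (ger0_norm e'_ge0) normrM normr_nat.
rewrite (ger0_norm (exprn_ge0 2 e_ge0)).
have : (1 - e) * `|(1 - e) ^+ k - 1 + k%:R * e| <= `|(1 - e) ^+ k - 1 + k%:R * e|.
  by rewrite ler_piMl // lerBlDr lerDl.
have -> : ((k.+1) ^ 2)%:R = (k ^ 2)%:R + (k.*2)%:R + 1 :> R.
  by rewrite -natrD natr1; congr _%:R; lia.
have : 0 <= (k.*2)%:R * e ^+ 2 :> R by rewrite mulr_ge0 ?exprn_ge0.
have : (k%:R : R) <= (k.*2)%:R by rewrite ler_nat -addnn leq_addr.
have : 0 <= e ^+ 2 by rewrite exprn_ge0.
nra.
Qed.
End FirstOrder.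

Section ErrorWeights.
Variable R : realFieldType.
Variables (n : nat) (m : err_model).
Hypotheses (n_gt0 : (0 < n)%N) (r_gt0 : (0 < nerr m)%N).
Local Notation r := (nerr m).
Local Notation config := {ffun 'I_n -> 'I_r.+1}.
Implicit Types (c : config) (e : R).

(* The weight of [c] in [h_eps]: [h_eps m U e] is convertible to
   [\sum_c err_weight c e * herald_pure U (labels c)]. *)
Definition err_weight c e : R :=
  \prod_(i < n) (if c i == ord0 then 1 - e else e / r%:R).

Lemma prod_err_split c (a b : R) :
  \prod_(i < n) (if c i == ord0 then a else b) =
  a ^+ (n - num_errors c) * b ^+ num_errors c.
Proof.
rewrite (bigID [pred i | c i == ord0]) /= mulrC.
rewrite (eq_bigr (fun=> b)) => [|i /negbTE -> //]; rewrite prodr_const.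
rewrite (eq_bigr (fun=> a)) => [|i -> //]; rewrite prodr_const mulrC.
congr (_ ^+ _ * _).
have -> : num_errors c = #|[predC [pred i | c i == ord0]]|.
  by apply: eq_card => i; rewrite !inE.
by apply: (canRL (addnK _)); rewrite cardC card_ord.
Qed.

Lemma err_weight0 c : err_weight c 0 = (c == no_error)%:R.
Proof.
rewrite /err_weight prod_err_split -num_errors_eq0 subr0 expr1n mul1r mul0r.
by case: (num_errors c) => [|k]; rewrite ?expr0 // exprS mul0r.
Qed.

Lemma err_weight_first_order c e : 0 <= e <= 1 ->
  `| err_weight c e - (num_errors c == 0%N)%:R * (1 - n%:R * e)
     - (num_errors c == 1%N)%:R * (e / r%:R) | <= (n ^ 2)%:R * e ^+ 2.
Proof.
move=> /[dup] e01 /andP[e_ge0 e_le1].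
have e'_ge0 : 0 <= 1 - e by rewrite subr_ge0.
have er_ge0 : 0 <= e / r%:R by rewrite divr_ge0 ?ler0n.
have er_le : e / r%:R <= e by rewrite ler_pdivrMr ?ltr0n // ler_peMr // ler1n.
have e2_le : e ^+ 2 <= (n ^ 2)%:R * e ^+ 2.
  by rewrite ler_peMl ?exprn_ge0 // ler1n expn_gt0 n_gt0.
rewrite /err_weight prod_err_split.
case: (num_errors c) (num_errors_le c) => [|[|k]] k_le /=.
- rewrite subn0 expr0 mulr1 mul1r mul0r subr0.
  have -> : (1 - e) ^+ n - (1 - n%:R * e) = (1 - e) ^+ n - 1 + n%:R * e by ring.
  exact: exp1B_quadratic_bound.
- rewrite expr1 mul0r subr0 mul1r.
  have -> : (1 - e) ^+ (n - 1) * (e / r%:R) - e / r%:R =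
            e / r%:R * ((1 - e) ^+ (n - 1) - 1) by ring.
  rewrite normrM (ger0_norm er_ge0).
  apply: le_trans (ler_pM er_ge0 (normr_ge0 _) er_le (exp1B_linear_bound _ e01)) _.
  rewrite mulrCA -expr2 ler_wpM2r ?exprn_ge0 // ler_nat; nia.
- rewrite !mul0r !subr0 normrM !ger0_norm ?exprn_ge0 // (le_trans _ e2_le) //.
  rewrite -[X in _ <= X]mul1r ler_pM ?exprn_ge0 ?exprn_ile1 ?gerBl //.
  rewrite -addn2 exprD -[X in _ <= X]mul1r.
  rewrite ler_pM ?exprn_ge0 ?exprn_ile1 ?(le_trans er_le) //.
  by rewrite !expr2 ler_pM.
Qed.

Lemma mixture_at0 (H : config -> R) : \sum_c err_weight c 0 * H c = H no_error.
Proof.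
rewrite (bigD1 no_error) //= err_weight0 eqxx mul1r big1 ?addr0 // => c /negbTE c_err.
by rewrite err_weight0 c_err mul0r.
Qed.

Lemma mixture_first_order (H : config -> R) e : 0 <= e <= 1 ->
  `| \sum_c err_weight c e * H c -
     ((1 - n%:R * e) * H no_error + e / r%:R * \sum_(c | num_errors c == 1%N) H c) |
  <= (n ^ 2)%:R * (\sum_c `|H c|) * e ^+ 2.
Proof.
move=> e01.
pose lin c := (num_errors c == 0%N)%:R * (1 - n%:R * e)
              + (num_errors c == 1%N)%:R * (e / r%:R).
have linE : \sum_c lin c * H c =
    (1 - n%:R * e) * H no_error + e / r%:R * \sum_(c | num_errors c == 1%N) H c.
  under eq_bigr do rewrite mulrDl; rewrite big_split /=; congr (_ + _).
    rewrite (bigD1 no_error) //= big1 ?addr0 => [|c /negbTE c_err].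
      by rewrite num_errors_eq0 eqxx mul1r.
    by rewrite num_errors_eq0 c_err !mul0r.
  rewrite mulr_sumr [RHS]big_mkcond; apply: eq_bigr => c _.
  by case: ifP; rewrite ?mul1r ?mul0r.
rewrite -linE -sumrB mulr_sumr mulr_suml (le_trans (ler_norm_sum _ _ _)) //.
apply: ler_sum => c _; rewrite -mulrBl normrM mulrAC ler_wpM2r //.
by rewrite /lin opprD addrA; apply: err_weight_first_order.
Qed.
End ErrorWeights.

Section Heralding.
Variable R : realType.
Variables (n : nat) (m : err_model) (U : 'M[R[i]]_n).
Hypotheses (trans : shift_transitive U) (n_gt0 : (0 < n)%N) (r_gt0 : (0 < nerr m)%N).
Local Notation r := (nerr m).
Local Notation herald c := (herald_pure U (@labels n m c)).

Lemma h_eps0 : h_eps m U 0 = herald no_error.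
Proof. exact: mixture_at0. Qed.

Lemma sum_single_error_herald :
  \sum_(c : {ffun 'I_n -> 'I_r.+1} | num_errors c == 1%N) herald c = r%:R * herald no_error.
Proof.
rewrite (@sum_single_errors _ _ _ _ (single_herald U)).
  by rewrite (sum_single_herald trans n_gt0 (@labels_no_error n m)).
move=> c i one_err err_i.
apply: herald_pure_single => [k k_i |]; last by rewrite labels_eq0.
by apply/eqP; rewrite labels_eq0 -[c k == ord0]negbK (single_error_at one_err err_i) k_i.
Qed.

Lemma h_Phi1_eq : h_Phi1 m U = n%:R^-1 * h_eps m U 0.
Proof.
have r_neq0 : r%:R != 0 :> R by rewrite pnatr_eq0 -lt0n.
by rewrite /h_Phi1 sum_single_error_herald h_eps0 natrM invfM -mulrA mulKf.
Qed.

Lemma h_eps_first_order : exists K delta : R, 0 < delta /\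
  forall e : R, 0 <= e < delta ->
    `| h_eps m U e - (h_eps m U 0 - (n - 1)%:R * h_eps m U 0 * e) | <= K * e ^+ 2.
Proof.
exists ((n ^ 2)%:R * \sum_c `|herald c|), 1; split=> // e /andP[e_ge0 e_lt1].
have -> : h_eps m U 0 - (n - 1)%:R * h_eps m U 0 * e =
  (1 - n%:R * e) * herald no_error + e / r%:R * (r%:R * herald no_error).
  rewrite h_eps0 natrB // mulrA divfK ?pnatr_eq0 -?lt0n //; ring.
by rewrite -sum_single_error_herald; apply: mixture_first_order; rewrite ?e_ge0 ?ltW.
Qed.
End Heralding.

Theorem theorem2 (R : realType) (ns : seq nat) (m : err_model) :
  all (fun k => 1 < k)%N ns ->
  (2 < dimn ns)%N ->
  err_valid m ->
  let U := fourier_tens R ns in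
  let h := h_eps m U in
  h_Phi1 m U = (dimn ns)%:R^-1 * h 0
  /\ exists K delta : R, 0 < delta /\
       forall eps : R, 0 <= eps < delta ->
         `| h eps - (h 0 - (dimn ns - 1)%:R * h 0 * eps) | <= K * eps ^+ 2.
Proof.
move=> ns_gt1 n_gt2 m_valid U h.
have ns_pos : all (fun k => 0 < k)%N ns by apply: sub_all ns_gt1 => k /ltnW.
have n_gt0 : (0 < dimn ns)%N by apply: leq_trans n_gt2.
have r_gt0 := err_valid_nerr m_valid.
have trans := fourier_tens_shift_transitive R ns_pos.
split; [exact: h_Phi1_eq | exact: h_eps_first_order].
Qed.
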